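(* Let $r,k$ be positive integers. The number of $r$-proper permutations $\pi\colon[k]\to[k]$ is at most $2^{(r+\log r)k}$.
   Context: $[k]=\{1,\dots,k\}$. A permutation $\pi\colon[k]\to[k]$ is called $r$-proper if for every $j\in[k]$, $|\{\ell\in[k]:\ \ell\le j,\ \pi(\ell)\ge j-1\}|\le r$. $\log$ is base $2$. *)

From mathcomp Require Import all_boot all_fingroup.
From Stdlib Require Import Reals.
Set Implicit Arguments. Unset Strict Implicit. Unset Printing Implicit Defensive.

(* [k] = {1,...,k} is modelled by 'I_k = {0,...,k-1}; the element l : 'I_k
   stands for l.+1 in [k], and a permutation p of 'I_k stands for the
   permutation  l.+1 |-> (p l).+1  of [k]. *)

Definition r_proper (r k : nat) (p : {perm 'I_k}) : bool :=
  [forall j : 'I_k,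
     #|[set l : 'I_k | (l.+1 <= j.+1) && (j.+1 - 1 <= (p l).+1)]| <= r].

Definition log2 (x : R) : R := (ln x / ln 2)%R.

From mathcomp Require Import all_boot all_fingroup zify.
Set Implicit Arguments. Unset Strict Implicit. Unset Printing Implicit Defensive.

(* We encode every permutation p of 'I_k injectively as a
   word of length 2k over option 'I_k and count r-proper permutations along
   the prefix tree of these words:
   - the letter at position 2(L-1) records p L when p moves L down by at
     least two (p L + 2 <= L), and is None otherwise;
   - the letter at position 2V+1 records p^-1 V when p^-1 V <= V + 1, and is
     None otherwise.
   Every L is recorded by one of the two kinds of letters, so the code
   determines p.  If p agrees with an r-proper q before a letter of the first
   kind, that letter is None or lies in a set of fewer than r values read off
   q; before a letter of the second kind, it is None or lies in a set of at
   most r positions.  Both sets are controlled by r-properness of q.  The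
   abstract prefix-tree counting lemma then gives at most (r (r+1))^k
   r-proper permutations, and (r (r+1))^k <= (r 2^r)^k = 2^((r + log r) k). *)

Lemma card_option_image (T U : finType) (f : T -> option U) (B : {set T})
    (A : {set U}) :
  (forall t u, t \in B -> f t = Some u -> u \in A) -> #|f @: B| <= #|A|.+1.
Proof.
move=> fBA; apply: leq_trans (_ : #|None |: [set Some u | u in A]| <= _).
  apply/subset_leq_card/subsetP => _ /imsetP[t tB ->].
  rewrite !inE; case ft: (f t) => [u|] //=.
  by rewrite imset_f // (fBA t u tB ft).
rewrite cardsU1 (card_imset _ (@Some_inj _)).
by case: (None \notin _).
Qed.

Lemma card_ord_below (k m : nat) : m <= k -> #|[set v : 'I_k | v < m]| = m.
Proof.
move=> le_mk; have widen_inj : injective (widen_ord le_mk).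
  by move=> x y /(congr1 val) /= /val_inj.
rewrite -[RHS]card_ord -(card_imset _ widen_inj).
apply: eq_card => v; rewrite !inE; apply/idP/imsetP => [lt_vm | [w _ ->]].
  by exists (Ordinal lt_vm) => //; apply: val_inj.
by rewrite /= ltn_ord.
Qed.

Section PrefixTree.
Variables (T X : finType) (code : T -> nat -> X) (S : {set T}).

Definition agree_upto (i : nat) (p q : T) : bool :=
  [forall j : 'I_i, code p j == code q j].

Lemma agree_uptoP i p q :
  reflect (forall j, j < i -> code p j = code q j) (agree_upto i p q).
Proof.
apply: (iffP forallP) => [agr j lt_ji | agr j]; last exact/eqP/agr.
exact/eqP/(agr (Ordinal lt_ji)).
Qed.

Definition cylinder (i : nat) (q : T) : {set T} :=
  [set p in S | agree_upto i p q].

Lemma fiber_sub_cylinder i q p1 : p1 \in cylinder i q ->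
  [set p in cylinder i q | code p i == code p1 i] \subset cylinder i.+1 p1.
Proof.
rewrite inE => /andP[_ /agree_uptoP agr1].
apply/subsetP => p; rewrite !inE => /andP[/andP[pS /agree_uptoP agr] /eqP eqi].
rewrite pS; apply/agree_uptoP => j; rewrite ltnS leq_eqVlt => /orP[/eqP-> //|].
by move=> lt_ji; rewrite agr // agr1.
Qed.

Variables (n : nat) (c : nat -> nat).
Hypothesis code_inj : {in S &, forall p q, agree_upto n p q -> p = q}.
Hypothesis branching : forall i q, i < n -> q \in S ->
  #|[set code p i | p in cylinder i q]| <= c i.

(* Induction on the number m of remaining positions: a cylinder at level i
   splits by its i-th letter into at most c i cylinders at level i + 1. *)
Lemma card_cylinder m i q : i + m = n -> q \in S ->
  #|cylinder i q| <= \prod_(i <= j < n) c j.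
Proof.
elim: m i q => [|m IH] i q def_n qS.
  rewrite addn0 in def_n; rewrite -def_n big_geq // -(cards1 q).
  apply/subset_leq_card/subsetP => p; rewrite !inE => /andP[pS agr].
  by rewrite (code_inj pS qS) // -def_n.
have lt_in : i < n by lia.
set Y := [set code p i | p in cylinder i q].
have fiber_bound y :
    #|[set p in cylinder i q | code p i == y]| <= \prod_(i.+1 <= j < n) c j.
  case: (set_0Vmem [set p in cylinder i q | code p i == y]) => [-> | [p1]].
    by rewrite cards0.
  rewrite inE => /andP[p1C /eqP <-].
  apply: leq_trans (subset_leq_card (fiber_sub_cylinder p1C)) _.
  by apply: IH; [lia | move: p1C; rewrite inE => /andP[]].
rewrite big_ltn // -sum1_card (partition_big (code^~ i) (mem Y)) /=; last first.
  by move=> p pC; apply: imset_f.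
apply: leq_trans (_ : \sum_(y in Y) \prod_(i.+1 <= j < n) c j <= _).
  by apply: leq_sum => y _; rewrite sum1dep_card; apply: fiber_bound.
by rewrite sum_nat_const leq_mul2r branching ?orbT.
Qed.

Theorem card_le_prod_branching : #|S| <= \prod_(0 <= j < n) c j.
Proof.
case: (set_0Vmem S) => [-> | [q qS]]; first by rewrite cards0.
apply: leq_trans (card_cylinder (add0n n) qS).
by apply/subset_leq_card/subsetP => p pS; rewrite inE pS; apply/agree_uptoP.
Qed.

End PrefixTree.

Section PermCode.
Variable k : nat.
Implicit Types (p q : {perm 'I_k}).

Definition drop_letter p (L : nat) : option 'I_k :=
  if insub L is Some L' then (if p L' + 2 <= L' then Some (p L') else None)
  else None.

Definition preimage_letter p (V : nat) : option 'I_k :=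
  if insub V is Some V' then
    (if (p^-1)%g V' <= V'.+1 then Some ((p^-1)%g V') else None)
  else None.

(* The code interleaves both kinds of letters: the drop letter of L comes just
   before the preimage letter of L - 1. *)
Definition perm_code p (i : nat) : option 'I_k :=
  if odd i then preimage_letter p i./2 else drop_letter p i./2.+1.

Lemma perm_code_even p s : perm_code p s.*2 = drop_letter p s.+1.
Proof. by rewrite /perm_code odd_double doubleK. Qed.

Lemma perm_code_drop p (L : 'I_k) : 0 < L ->
  perm_code p (L.-1).*2 = if p L + 2 <= L then Some (p L) else None.
Proof. by move=> L_gt0; rewrite perm_code_even prednK // /drop_letter valK. Qed.

Lemma perm_code_preimage p (V : 'I_k) : perm_code p V.*2.+1 =
  if (p^-1)%g V <= V.+1 then Some ((p^-1)%g V) else None.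
Proof.
by rewrite /perm_code /= odd_double /= uphalf_double /preimage_letter valK.
Qed.

Notation agree := (agree_upto (@perm_code)).

(* Every position is recorded, by its drop letter or by the preimage letter
   of its image, so the code determines the permutation. *)
Lemma perm_code_inj p q : agree k.*2 p q -> p = q.
Proof.
move=> /agree_uptoP agr; apply/permP => L.
have lt_L_k := ltn_ord L; have lt_pL_k := ltn_ord (p L).
case: (leqP (p L + 2) L) => drop_pL.
  have := agr (L.-1).*2 ltac:(lia).
  by rewrite !perm_code_drop ?drop_pL; try lia; case: ifP => // _ [].
have := agr (p L).*2.+1 ltac:(lia).
rewrite !perm_code_preimage permK ifT; last by lia.
by case: ifP => // _ [] preim; rewrite {2}preim permKV.
Qed.

(* Possible drop letters at position L for permutations agreeing with q before
   that letter. *)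
Definition drop_candidates q (L : nat) : {set 'I_k} :=
  [set v : 'I_k | (v + 2 <= L) && (L <= (q^-1)%g v)].

(* Possible preimage letters of V for permutations agreeing with q before that
   letter. *)
Definition preimage_candidates q (V : nat) : {set 'I_k} :=
  [set l : 'I_k | (l <= V.+1) && (V <= q l)].

Lemma drop_letter_candidate p q (L : 'I_k) v : 0 < L ->
  agree (L.-1).*2 p q -> perm_code p (L.-1).*2 = Some v ->
  v \in drop_candidates q L.
Proof.
move=> L_gt0 /agree_uptoP agr; rewrite perm_code_drop //.
case: ifP => // drop_pL [pL_v]; rewrite -pL_v inE drop_pL /=.
have lt_v_k := ltn_ord (p L); have lt_L_k := ltn_ord L.
(* The preimage letter of p L is None for p, hence for q. *)
have q_far : p L < ((q^-1)%g (p L)).-1.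
  have := agr (p L).*2.+1 ltac:(lia).
  rewrite !perm_code_preimage permK ifF; last by apply/negbTE; lia.
  by case: ifP => // /negbT; lia.
(* An earlier position L' with q L' = p L would give p L' = p L. *)
rewrite leqNgt; apply/negP => lt_L'L.
have qL'_pL : q ((q^-1)%g (p L)) = p L by rewrite permKV.
move: ((q^-1)%g (p L)) qL'_pL q_far lt_L'L => L' qL'_pL q_far lt_L'L.
have := agr (L'.-1).*2 ltac:(lia).
rewrite !perm_code_drop; try lia.
rewrite qL'_pL [in RHS]ifT; last by lia.
by case: ifP => // _ [] /perm_inj eqL; move: lt_L'L; rewrite eqL ltnn.
Qed.

Lemma preimage_letter_candidate p q (V : 'I_k) l :
  agree V.*2.+1 p q -> perm_code p V.*2.+1 = Some l ->
  l \in preimage_candidates q V.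
Proof.
move=> /agree_uptoP agr; rewrite perm_code_preimage.
case: ifP => // near_V [<-]; rewrite inE near_V /=.
move: ((p^-1)%g V) (permKV p V) near_V => L pL_V near_V.
have lt_V_k := ltn_ord V.
(* The drop letter of L = p^-1 V is None for p, hence for q. *)
have q_near : L < q L + 2.
  rewrite ltnNge; apply/negP => drop_qL.
  have := agr (L.-1).*2 ltac:(lia).
  rewrite !perm_code_drop ?pL_V ?drop_qL; try lia.
  by rewrite ifF //; apply/negbTE; lia.
(* A smaller value q L < V would have preimage letter L for q, hence for p. *)
rewrite leqNgt; apply/negP => lt_qL_V.
have := agr (q L).*2.+1 ltac:(lia).
rewrite !perm_code_preimage permK [in RHS]ifT; last by lia.
case: ifP => // _ [] eqL.
have qL_V : q L = V by rewrite -pL_V -{2}eqL permKV.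
by move: lt_qL_V; rewrite qL_V ltnn.
Qed.

(* The positions l < L split into those with q l <= L - 2 (far) and those with
   q l >= L - 1 (near, at most r of them by r-properness at L).  The values
   below L - 1 are the images of the far positions and the drop candidates,
   so there is one drop candidate fewer than near positions. *)
Lemma card_drop_candidates r q (L : 'I_k) : r_proper r q -> 0 < L ->
  #|drop_candidates q L| < r.
Proof.
move=> /forallP /(_ L) proper_L L_gt0.
have le_L_k : L <= k by have := ltn_ord L; lia.
set far := [set l : 'I_k | (l < L) && (q l + 2 <= L)].
set near := [set l : 'I_k | (l < L) && (L <= (q l).+1)].
have far_near : #|far| + #|near| = L.
  rewrite -(card_ord_below le_L_k).
  rewrite -(cardsID [set l : 'I_k | q l + 2 <= L] [set v : 'I_k | v < L]).
  congr (_ + _); apply: eq_card => l; rewrite !inE //=.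
  by case: (l < L) => //=; lia.
have cand_far : #|drop_candidates q L| + #|far| = L.-1.
  rewrite -(card_ord_below (leq_trans (leq_pred L) le_L_k)).
  rewrite -(cardsID [set v : 'I_k | (q^-1)%g v < L] [set v : 'I_k | v < L.-1]).
  rewrite addnC; congr (_ + _).
    (* q maps the far positions onto the values below L - 1 sent below L *)
    rewrite -(card_imset _ (@perm_inj _ q)) (can_imset_pre _ (permK q)).
    by apply: eq_card => v; rewrite !inE /= permKV; lia.
  by apply: eq_card => v; rewrite !inE /=; lia.
have near_r : #|near| <= r.
  apply: leq_trans proper_L; apply/subset_leq_card/subsetP => l.
  by rewrite !inE; lia.
lia.
Qed.

(* The preimage candidates of V are counted by r-properness at V + 1, or at V
   when V is the last position. *)
Lemma card_preimage_candidates r q (V : 'I_k) : r_proper r q ->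
  #|preimage_candidates q V| <= r.
Proof.
move=> /forallP proper_q; case: (ltnP V.+1 k) => [lt_V1_k | le_k_V1].
  apply: leq_trans (proper_q (Ordinal lt_V1_k)).
  by apply/subset_leq_card/subsetP => l; rewrite !inE /=; lia.
apply: leq_trans (proper_q V); apply/subset_leq_card/subsetP => l.
by have := ltn_ord l; have := ltn_ord (q l); rewrite !inE; lia.
Qed.

Variable r : nat.
Hypothesis r_gt0 : 0 < r.

Notation proper_cylinder := (cylinder (@perm_code) [set p | r_proper r p]).

Lemma branching_drop q s : r_proper r q ->
  #|[set perm_code p s.*2 | p in proper_cylinder s.*2 q]| <= r.
Proof.
move=> proper_q; case: (ltnP s.+1 k) => [lt_s1_k | le_k_s1].
  pose L := Ordinal lt_s1_k; have -> : s = L.-1 by [].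
  have card_cand := card_drop_candidates (L := L) proper_q (ltn0Sn s).
  apply: leq_trans (card_option_image _) card_cand => p v.
  by rewrite inE => /andP[_]; apply: drop_letter_candidate.
have card0_lt_r : #|(set0 : {set 'I_k})| < r by rewrite cards0.
apply: leq_trans (card_option_image _) card0_lt_r => p v _.
by rewrite perm_code_even /drop_letter insubN // -leqNgt.
Qed.

Lemma branching_preimage q s : r_proper r q -> s < k ->
  #|[set perm_code p s.*2.+1 | p in proper_cylinder s.*2.+1 q]| <= r.+1.
Proof.
move=> proper_q lt_s_k; pose V := Ordinal lt_s_k; have -> : s = V by [].
have card_cand : #|preimage_candidates q V| < r.+1.
  by rewrite ltnS; apply: card_preimage_candidates.
apply: leq_trans (card_option_image _) card_cand => p l.
by rewrite inE => /andP[_]; apply: preimage_letter_candidate.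
Qed.

Lemma card_proper_le :
  #|[set p : {perm 'I_k} | r_proper r p]| <= (r * r.+1) ^ k.
Proof.
have -> : (r * r.+1) ^ k = \prod_(0 <= j < k.*2) (if odd j then r.+1 else r).
  elim: k => [|n IH]; first by rewrite big_geq.
  rewrite doubleS !big_nat_recr //= -?IH; try lia.
  by rewrite odd_double /= expnS mulnC mulnA.
apply: (card_le_prod_branching (code := @perm_code)).
  by move=> p q _ _; apply: perm_code_inj.
move=> i q; rewrite inE -[i]odd_double_half.
case: (odd i) => /= lt_i_2k proper_q; rewrite odd_double /=.
  by apply: branching_preimage => //; lia.
exact: branching_drop.
Qed.

End PermCode.

(* Reals is imported only now since it rebinds ^ on nat to Nat.pow. *)
From Stdlib Require Import Reals Lra.

Lemma Rpower2_log2 (x : R) : (0 < x)%R -> Rpower 2 (log2 x) = x.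
Proof.
move=> x_gt0; have ln2_gt0 : (0 < ln 2)%R.
  by rewrite -ln_1; apply: ln_increasing; lra.
rewrite /Rpower /log2 /Rdiv Rmult_assoc Rinv_l ?Rmult_1_r ?exp_ln //; lra.
Qed.

Lemma INR_expn (a b : nat) : INR (expn a b) = (INR a ^ b)%R.
Proof. by elim: b => [|b IH] //; rewrite expnS mulnE mult_INR IH. Qed.

Theorem lemma10 (r k : nat) (hr : 0 < r) (hk : 0 < k) :
  (INR #|[set p : {perm 'I_k} | r_proper r p]|
     <= Rpower 2 ((INR r + log2 (INR r)) * INR k))%R.
Proof.
have r_gt0 : (0 < INR r)%R by apply/lt_0_INR/ltP.
have card_le :
    #|[set p : {perm 'I_k} | r_proper r p]| <= expn (r * expn 2 r) k.
  apply: leq_trans (card_proper_le k hr) _.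
  by rewrite leq_exp2r // leq_mul2l ltn_expl ?orbT.
have -> :
    Rpower 2 ((INR r + log2 (INR r)) * INR k) = INR (expn (r * expn 2 r) k).
  have base_gt0 : (0 < 2 ^ r * INR r)%R.
    by apply: Rmult_lt_0_compat => //; apply: pow_lt; lra.
  rewrite -Rpower_mult Rpower_plus Rpower2_log2 // !Rpower_pow //; try lra.
  rewrite INR_expn mulnE mult_INR INR_expn Rmult_comm.
  by change (INR 2) with 2%R.
by apply: le_INR; apply/leP.
Qed.
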